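(* Let $(M_0,d,\Gamma)$ be a cone-like space. For every $x\in M_0$ there is a constant $K_x>0$ such that $d(x,f(x))<K_x$ for every $f\in\Gamma$ with $\rho(f)<1$.
   Context: A cone-like space is a locally compact metric space $(M_0,d)$ together with a finitely generated, non-trivial group $\Gamma$ acting freely and properly discontinuously on $M_0$ by homotheties (i.e. for each $f\in\Gamma$ there is $\rho(f)>0$ with $d(f(x),f(y))=\rho(f)d(x,y)$ for all $x,y$), such that the identity is the only element of $\Gamma$ acting as an isometry, and such that the quotient $M_0/\Gamma$ is compact. (Such a $\Gamma$ is necessarily Abelian.) *)

From Stdlib Require Import Reals List.
Open Scope R_scope.

Section ConeLike.
Variable M : Type.
Variable d : M -> M -> R.

Definition is_metric : Prop :=
  (forall x y, 0 <= d x y) /\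
  (forall x y, d x y = 0 <-> x = y) /\
  (forall x y, d x y = d y x) /\
  (forall x y z, d x z <= d x y + d y z).

Definition ball (x : M) (r : R) : M -> Prop := fun y => d x y < r.

Definition is_open (U : M -> Prop) : Prop :=
  forall x, U x -> exists eps, 0 < eps /\ forall y, ball x eps y -> U y.

Definition is_compact (K : M -> Prop) : Prop :=
  forall (I : Type) (U : I -> M -> Prop),
    (forall i, is_open (U i)) ->
    (forall x, K x -> exists i, U i x) ->
    exists l : list I, forall x, K x -> exists i, In i l /\ U i x.

Definition locally_compact : Prop :=
  forall x, exists K eps, 0 < eps /\ is_compact K /\ forall y, ball x eps y -> K y.

Variable G : Type.
Variable one : G.
Variable mul : G -> G -> G.
Variable inv : G -> G.
Variable act : G -> M -> M.
Variable rho : G -> R.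

Definition is_group : Prop :=
  (forall a b c, mul a (mul b c) = mul (mul a b) c) /\
  (forall a, mul one a = a /\ mul a one = a) /\
  (forall a, mul (inv a) a = one /\ mul a (inv a) = one).

Inductive gen_by (l : list G) : G -> Prop :=
| gen_one : gen_by l one
| gen_in : forall g, In g l -> gen_by l g
| gen_mul : forall g h, gen_by l g -> gen_by l h -> gen_by l (mul g h)
| gen_inv : forall g, gen_by l g -> gen_by l (inv g).

Definition finitely_generated : Prop :=
  exists l : list G, forall g, gen_by l g.

Definition nontrivial : Prop := exists g, g <> one.

Definition is_action : Prop :=
  (forall x, act one x = x) /\
  (forall g h x, act (mul g h) x = act g (act h x)).

Definition acts_freely : Prop := forall g x, act g x = x -> g = one.

Definition properly_discontinuous : Prop :=
  forall K, is_compact K ->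
    exists l : list G, forall g, (exists x, K x /\ K (act g x)) -> In g l.

Definition acts_by_homotheties : Prop :=
  forall g, 0 < rho g /\ forall x y, d (act g x) (act g y) = rho g * d x y.

Definition only_identity_isometry : Prop :=
  forall g, (forall x y, d (act g x) (act g y) = d x y) -> g = one.

(* compactness of the quotient M/Γ: open sets of M/Γ are exactly images of
   Γ-invariant open subsets of M, so every cover of M by Γ-invariant open
   sets has a finite subcover *)
Definition compact_quotient : Prop :=
  forall (I : Type) (U : I -> M -> Prop),
    (forall i, is_open (U i)) ->
    (forall i g x, U i x -> U i (act g x)) ->
    (forall x, exists i, U i x) ->
    exists l : list I, forall x, exists i, In i l /\ U i x.

Definition cone_like : Prop :=
  is_metric /\ locally_compact /\ is_group /\ finitely_generated /\
  nontrivial /\ is_action /\ acts_freely /\ properly_discontinuous /\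
  acts_by_homotheties /\ only_identity_isometry /\ compact_quotient.

End ConeLike.

From Stdlib Require Import Reals List Lra.
Open Scope R_scope.

(* Idea.  Γ is nontrivial, so some g in Γ is not an isometry, i.e. c := ρ(g) ≠ 1.
   The ratio map ρ is multiplicative, hence every commutator of Γ acts as an
   isometry and is therefore the identity: Γ is Abelian.  For any f in Γ, the
   commutation g(f x) = f(g x) and the homothety property give
     d(g x, g f x) = c·d(x, f x)   and   d(f x, g f x) = ρ(f)·d(x, g x),
   so the quadrilateral inequality |d(a,b) - d(a',b')| <= d(a,a') + d(b,b')
   yields |1 - c|·d(x, f x) <= (1 + ρ(f))·d(x, g x).  When ρ(f) < 1 this bounds
   d(x, f x) by 2·d(x, g x)/|1 - c|, uniformly in f. *)

Section Metric.

Variables (M : Type) (d : M -> M -> R).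
Hypothesis Hmet : is_metric M d.

Lemma quadrilateral_ineq (a b a' b' : M) :
  Rabs (d a b - d a' b') <= d a a' + d b b'.
Proof.
  destruct Hmet as [_ [_ [Hsym Htri]]].
  pose proof (Htri a a' b) as T1; pose proof (Htri a' b' b) as T2.
  pose proof (Htri a' a b') as T3; pose proof (Htri a b b') as T4.
  rewrite (Hsym b' b) in T2; rewrite (Hsym a' a) in T3.
  apply Rabs_le; split; lra.
Qed.

End Metric.

Arguments quadrilateral_ineq {M d}.

Section HomothetyGroup.

Variables (M : Type) (d : M -> M -> R).
Variables (G : Type) (one : G) (mul : G -> G -> G) (inv : G -> G).
Variables (act : G -> M -> M) (rho : G -> R).

Hypothesis Hmet : is_metric M d.
Hypothesis Hgrp : is_group G one mul inv.
Hypothesis Hact : is_action M G one mul act.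
Hypothesis Hhom : acts_by_homotheties M d G act rho.
Hypothesis Hiso : only_identity_isometry M d G one act.

(* The ratio of a homothety is determined by any pair of distinct points,
   so ρ is a homomorphism to the multiplicative group of positive reals. *)
Lemma rho_mul {p q : M} : p <> q -> forall a b, rho (mul a b) = rho a * rho b.
Proof.
  intros Hpq a b.
  destruct Hmet as [Hpos [Hzero _]].
  assert (Hd : 0 < d p q).
  { destruct (Hpos p q) as [H | H]; [exact H |].
    exfalso; apply Hpq, Hzero; auto. }
  pose proof (proj2 (Hhom (mul a b)) p q) as E.
  rewrite !(proj2 Hact), (proj2 (Hhom a)), (proj2 (Hhom b)) in E.
  apply (Rmult_eq_reg_r (d p q)); lra.
Qed.

Lemma rho_eq1_one (g : G) : rho g = 1 -> g = one.
Proof.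
  intro Hg; apply Hiso; intros a b.
  rewrite (proj2 (Hhom g)), Hg; ring.
Qed.

(* Γ is Abelian: the commutator (fg)(gf)^-1 has ratio 1. *)
Lemma group_abelian {p q : M} : p <> q -> forall f g, mul f g = mul g f.
Proof.
  intros Hpq f g.
  destruct Hgrp as [Hassoc [Hid Hinv]].
  pose proof (rho_mul Hpq) as Hmul.
  assert (Hrho_one : rho one = 1).
  { pose proof (Hmul one one) as E; rewrite (proj1 (Hid one)) in E.
    pose proof (proj1 (Hhom one)); nra. }
  set (h := mul (mul f g) (inv (mul g f))).
  assert (Hh : rho h = 1).
  { pose proof (Hmul (inv (mul g f)) (mul g f)) as E.
    rewrite (proj1 (Hinv (mul g f))), Hrho_one, !Hmul in E.
    unfold h; rewrite !Hmul.
    pose proof (proj1 (Hhom f)); pose proof (proj1 (Hhom g)); nra. }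
  apply rho_eq1_one in Hh.
  replace (mul f g) with (mul h (mul g f)).
  - rewrite Hh; apply Hid.
  - unfold h; rewrite <- Hassoc, (proj1 (Hinv (mul g f))); apply Hid.
Qed.

Lemma displacement_bound (x : M) (g f : G) :
  act g x <> x ->
  Rabs (1 - rho g) * d x (act f x) <= (1 + rho f) * d x (act g x).
Proof.
  intro Hgx.
  assert (Hcomm : act g (act f x) = act f (act g x)).
  { rewrite <- !(proj2 Hact); f_equal; apply (group_abelian Hgx). }
  destruct Hmet as [Hpos [_ [Hsym _]]].
  pose proof (quadrilateral_ineq Hmet x (act f x) (act g x) (act g (act f x)))
    as Q.
  rewrite (proj2 (Hhom g)) in Q.
  rewrite (Hsym (act f x)), Hcomm, (proj2 (Hhom f)), (Hsym (act g x)) in Q.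
  replace (d x (act f x) - rho g * d x (act f x))
    with ((1 - rho g) * d x (act f x)) in Q by ring.
  rewrite Rabs_mult, (Rabs_pos_eq (d x (act f x))) in Q by apply Hpos.
  lra.
Qed.

End HomothetyGroup.

Arguments rho_eq1_one {M d G one act rho}.
Arguments displacement_bound {M d G one mul inv act rho}.

Theorem lemma2p4 (M : Type) (d : M -> M -> R) (G : Type) (one : G)
  (mul : G -> G -> G) (inv : G -> G) (act : G -> M -> M) (rho : G -> R)
  (Hcone : cone_like M d G one mul inv act rho) :
  forall x : M, exists K : R, 0 < K /\
    forall f : G, rho f < 1 -> d x (act f x) < K.
Proof.
  destruct Hcone as
    [Hmet [_ [Hgrp [_ [[g Hg] [Hact [Hfree [_ [Hhom [Hiso _]]]]]]]]]].
  intro x.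
  assert (Hgx : act g x <> x) by (intro E; exact (Hg (Hfree g x E))).
  assert (Hc : 0 < Rabs (1 - rho g)).
  { apply Rabs_pos_lt; intro E.
    apply Hg, (rho_eq1_one Hhom Hiso); lra. }
  set (D := d x (act g x)).
  assert (HD : 0 <= D) by apply Hmet.
  exists (2 * D / Rabs (1 - rho g) + 1); split.
  - assert (0 <= 2 * D / Rabs (1 - rho g))
      by (apply Rmult_le_pos; [lra | apply Rlt_le, Rinv_0_lt_compat; lra]).
    lra.
  - intros f Hf.
    pose proof (displacement_bound Hmet Hgrp Hact Hhom Hiso x g f Hgx) as B.
    fold D in B.
    assert (Hfpos : 0 < rho f) by apply Hhom.
    assert (B2 : Rabs (1 - rho g) * d x (act f x) <= 2 * D) by nra.
    apply (Rmult_lt_reg_l (Rabs (1 - rho g))); [exact Hc |].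
    replace (Rabs (1 - rho g) * (2 * D / Rabs (1 - rho g) + 1))
      with (2 * D + Rabs (1 - rho g)) by (field; lra).
    lra.
Qed.
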